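(* There exist symmetric pseudo-Boolean functions of $n$ variables for which any quadratization must involve at least $\Omega(\sqrt{n})$ auxiliary variables; that is, there is a constant $c>0$ such that for infinitely many $n$ there is a symmetric $f:\{0,1\}^n\to\mathbb{R}$ every quadratization of which uses at least $c\sqrt n$ auxiliary variables.
   Context: A pseudo-Boolean function is a map $\{0,1\}^n\to\mathbb{R}$; it is symmetric if its value depends only on the Hamming weight. A quadratization of $f$ using $m$ auxiliary variables is a polynomial $g(x,y)$ of degree at most $2$ in $x_1,\ldots,x_n,y_1,\ldots,y_m$ such that $f(x)=\min\{g(x,y):y\in\{0,1\}^m\}$ for all $x\in\{0,1\}^n$. *)

From Stdlib Require Import Reals.
Open Scope R_scope.

Fixpoint sumR (k : nat) (F : nat -> R) : R :=
  match k with
  | O => 0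
  | S k' => sumR k' F + F k'
  end.

(* A point of {0,1}^n is encoded as x : nat -> bool with x i = false for i >= n. *)
Definition in_cube (n : nat) (x : nat -> bool) : Prop :=
  forall i, (n <= i)%nat -> x i = false.

Definition b2R (b : bool) : R := if b then 1 else 0.

Definition hweight (n : nat) (x : nat -> bool) : nat :=
  List.fold_right (fun i acc => ((if x i then 1 else 0) + acc)%nat) 0%nat (List.seq 0 n).

Definition symmetric_pbf (n : nat) (f : (nat -> bool) -> R) : Prop :=
  forall x x', in_cube n x -> in_cube n x' -> hweight n x = hweight n x' -> f x = f x'.

(* A polynomial of degree at most 2 in k variables z_0..z_{k-1}, given by
   its coefficients: a0 + sum_i a_i z_i + sum_{i,j} b_{ij} z_i z_j. *)
Record quad_poly := QuadPoly {
  qp_const : R;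
  qp_lin : nat -> R;
  qp_quad : nat -> nat -> R }.

Definition qp_eval (k : nat) (g : quad_poly) (z : nat -> bool) : R :=
  qp_const g
  + sumR k (fun i => qp_lin g i * b2R (z i))
  + sumR k (fun i => sumR k (fun j => qp_quad g i j * b2R (z i) * b2R (z j))).

(* Concatenate x in {0,1}^n and y in {0,1}^m into a point of {0,1}^(n+m):
   variables x_1..x_n are z_0..z_{n-1}, y_1..y_m are z_n..z_{n+m-1}. *)
Definition concat_pt (n : nat) (x y : nat -> bool) : nat -> bool :=
  fun i => if Nat.ltb i n then x i else y (i - n)%nat.

Definition is_quadratization (n m : nat) (f : (nat -> bool) -> R) (g : quad_poly) : Prop :=
  forall x, in_cube n x ->
    (forall y, in_cube m y -> f x <= qp_eval (n + m) g (concat_pt n x y)) /\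
    (exists y, in_cube m y /\ qp_eval (n + m) g (concat_pt n x y) = f x).

(* Take f(x) = s^|x|.  On 2^t - 1 variables, let x_k (k < 2^t) be the point whose i-th coordinate
   is bit floor(log2 (i+1)) of k, so that |x_k| = k.  If g quadratizes f with m auxiliary variables
   and y_k is optimal for x_k, then every coordinate of (x_k, y_k), viewed as a function of k, is
   one of 1 + t + m Boolean vectors (the constant 1, a bit of k, or an auxiliary).  Hence the vector
   (s^k)_k = (g(x_k, y_k))_k lies in the span of at most (1 + t + m)^2 pairwise products of them.
   A proper subspace contains (s^k)_k only for s a root of some nonzero polynomial, and there are
   finitely many spans of 0/1 vectors, so for a suitable s this forces (1 + t + m)^2 >= 2^t,
   i.e. m >= sqrt(2^t - 1) / 2 once t >= 10. *)

From Stdlib Require Import Reals Lia Lra Bool.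
Open Scope R_scope.

Lemma hweight_S n x : hweight (S n) x = (hweight n x + (if x n then 1 else 0))%nat.
Proof.
  unfold hweight. rewrite List.seq_S, List.fold_right_app. simpl.
  generalize (if x n then 1%nat else 0%nat) as c. intro c.
  induction (List.seq 0 n) as [|a l IH]; simpl; lia.
Qed.

Lemma hweight_ext n x x' : (forall i, (i < n)%nat -> x i = x' i) -> hweight n x = hweight n x'.
Proof.
  induction n as [|n IH]; intro Hxx'; [reflexivity|].
  rewrite !hweight_S, IH by (intros; apply Hxx'; lia).
  rewrite (Hxx' n) by lia. reflexivity.
Qed.

Lemma hweight_add a b x :
  hweight (a + b) x = (hweight a x + hweight b (fun i => x (a + i)%nat))%nat.
Proof.
  induction b as [|b IH]; [rewrite Nat.add_0_r; change (hweight 0 _) with 0%nat; lia|].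
  rewrite Nat.add_succ_r, !hweight_S, IH. lia.
Qed.

Lemma hweight_const n (c : bool) : hweight n (fun _ => c) = (n * Nat.b2n c)%nat.
Proof. induction n as [|n IH]; [reflexivity|]. rewrite hweight_S, IH. destruct c; simpl; lia. Qed.

(* The coordinates 2^a - 1, ..., 2^(a+1) - 2 form a block of size 2^a, all equal to bit a of k. *)
Definition binary_point (t k : nat) : nat -> bool :=
  fun i => Nat.ltb i (2 ^ t - 1) && Nat.testbit k (Nat.log2 (i + 1)).

Lemma in_cube_binary_point t k : in_cube (2 ^ t - 1) (binary_point t k).
Proof. intros i Hi. unfold binary_point. rewrite (proj2 (Nat.ltb_ge _ _) Hi). reflexivity. Qed.

Lemma concat_pt_l n x y i : (i < n)%nat -> concat_pt n x y i = x i.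
Proof. intro Hi. unfold concat_pt. rewrite (proj2 (Nat.ltb_lt _ _) Hi). reflexivity. Qed.

Lemma concat_pt_r n x y i : (n <= i)%nat -> concat_pt n x y i = y (i - n)%nat.
Proof. intro Hi. unfold concat_pt. rewrite (proj2 (Nat.ltb_ge _ _) Hi). reflexivity. Qed.

Lemma log2_lt_binary_dim t i : (i < 2 ^ t - 1)%nat -> (Nat.log2 (i + 1) < t)%nat.
Proof. intro Hi. apply Nat.log2_lt_pow2; lia. Qed.

Lemma binary_point_bit t k i :
  (i < 2 ^ t - 1)%nat -> binary_point t k i = Nat.testbit k (Nat.log2 (i + 1)).
Proof. intro Hi. unfold binary_point. rewrite (proj2 (Nat.ltb_lt _ _) Hi). reflexivity. Qed.

Lemma hweight_binary_point t k : (k < 2 ^ t)%nat -> hweight (2 ^ t - 1) (binary_point t k) = k.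
Proof.
  intro Hk. rewrite <- (Nat.mod_small k (2 ^ t)) at 2 by exact Hk. clear Hk.
  induction t as [|t IH]; [reflexivity|].
  assert (Hpos : (2 ^ t <> 0)%nat) by (apply Nat.pow_nonzero; lia).
  replace (2 ^ S t - 1)%nat with ((2 ^ t - 1) + 2 ^ t)%nat by (rewrite Nat.pow_succ_r'; lia).
  rewrite hweight_add, (hweight_ext _ _ (binary_point t k)), IH.
  2:{ intros i Hi. unfold binary_point. rewrite Nat.pow_succ_r'.
      rewrite !(proj2 (Nat.ltb_lt _ _)) by lia. reflexivity. }
  rewrite (hweight_ext _ _ (fun _ => Nat.testbit k t)), hweight_const.
  2:{ intros i Hi. unfold binary_point. rewrite Nat.pow_succ_r'.
      rewrite (proj2 (Nat.ltb_lt _ _)) by lia.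
      cbn [andb]. f_equal. apply Nat.log2_unique; [lia|]. rewrite Nat.pow_succ_r'. lia. }
  rewrite Nat.pow_succ_r', (Nat.mul_comm 2), Nat.Div0.mod_mul_r, (Nat.testbit_spec' k t). lia.
Qed.

Lemma sqrt_le_of_square_bound t m :
  (10 <= t)%nat -> (2 ^ t <= (1 + t + m) * (1 + t + m))%nat ->
  1 / 2 * sqrt (INR (2 ^ t - 1)) <= INR m.
Proof.
  intros Ht Hm.
  assert (Hexp : (4 * (t + 1) * (t + 1) + 1 <= 2 ^ t)%nat).
  { clear Hm. induction Ht as [|t Ht IH]; [simpl; lia|]. rewrite Nat.pow_succ_r'. nia. }
  assert (Hlo : sqrt (INR (2 * (t + 1) * (2 * (t + 1)))) <= sqrt (INR (2 ^ t - 1)))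
    by (apply sqrt_le_1_alt, le_INR; lia).
  assert (Hhi : sqrt (INR (2 ^ t - 1)) <= sqrt (INR ((1 + t + m) * (1 + t + m))))
    by (apply sqrt_le_1_alt, le_INR; lia).
  rewrite mult_INR, sqrt_square in Hlo, Hhi by apply pos_INR.
  rewrite !mult_INR, !plus_INR in Hlo. rewrite !plus_INR in Hhi. simpl INR in Hlo, Hhi. lra.
Qed.

From mathcomp Require Import all_boot all_algebra zify Rstruct.
Set Implicit Arguments. Unset Strict Implicit. Unset Printing Implicit Defensive.
Import GRing.Theory Num.Theory.
Local Open Scope ring_scope.

Lemma exists_nonroot (K : numDomainType) (p : {poly K}) : p != 0 -> exists x, ~~ root p x.
Proof.
move=> p_neq0; have /allPn[i _ Ni] : ~~ all (fun i : nat => root p i%:R) (iota 0 (size p)).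
  apply: contraFN (ltnn (size p)) => /allP roots_p.
  rewrite -[X in (X < _)%N](size_iota 0) -(size_map (fun i : nat => i%:R : K)).
  apply: max_poly_roots p_neq0 _ _; first by apply/allP => _ /mapP[i /roots_p ? ->].
  by rewrite map_inj_uniq ?iota_uniq // => a b /eqP; rewrite eqr_nat => /eqP.
by exists i%:R.
Qed.

Definition moment_row (K : nzSemiRingType) N (x : K) : 'rV[K]_N := \row_(k < N) x ^+ k.

Lemma moment_row_annihilator (K : fieldType) D N (A : 'M[K]_(D, N)) :
  (\rank A < N)%N -> exists2 p : {poly K}, p != 0 & forall x, (moment_row N x <= A)%MS -> root p x.
Proof.
move=> rankA; have /rowV0Pn[c c_ker c_neq0] : kermx A^T != 0.
  by rewrite -mxrank_eq0 mxrank_ker mxrank_tr subn_eq0 -ltnNge.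
exists (rVpoly c).
  by apply: contra_neq c_neq0 => c0; rewrite -[c]rVpolyK c0 linear0.
move=> x /submxP[th Ex]; apply/eqP.
have /eqP cA0 : c *m A^T == 0 by rewrite -sub_kermx.
transitivity ((moment_row N x *m c^T) 0 0).
  rewrite /rVpoly horner_poly mxE; apply: eq_bigr => k _.
  by rewrite valK !mxE mulrC.
by rewrite Ex -mulmxA -(trmxK A) -trmx_mul cA0 trmx0 mulmx0 mxE.
Qed.

Lemma exists_moment_row_notin (K : numFieldType) (I : finType) N (S : I -> 'M[K]_N) :
  exists x, forall i, (\rank (S i) < N)%N -> ~~ (moment_row N x <= S i)%MS.
Proof.
have /fin_all_exists[p p_spec] : forall i, exists p : {poly K}, p != 0 /\
    ((\rank (S i) < N)%N -> forall x, (moment_row N x <= S i)%MS -> root p x).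
  move=> i; case: (ltnP (\rank (S i)) N) => [rankS | rankS].
    by have [q q_neq0 q_root] := moment_row_annihilator rankS; exists q.
  by exists 1; rewrite oner_neq0.
have [|x x_nonroot] := @exists_nonroot _ (\prod_i p i).
  by apply/prodf_neq0 => i _; case: (p_spec i).
exists x => i rankS; apply: contra x_nonroot => x_in.
by rewrite (bigD1 i) //= rootM (p_spec i).2.
Qed.

Section BoolRows.
Variables (K : fieldType) (N : nat).

Definition bool_row (u : {ffun 'I_N -> bool}) : 'rV[K]_N := \row_k (u k)%:R.

Definition bool_span (A : {set {ffun 'I_N -> bool}}) : 'M[K]_N :=
  (\sum_(u in A) <<bool_row u>>)%MS.

Lemma mxrank_bool_span A : (\rank (bool_span A) <= #|A|)%N.
Proof.
apply: leq_trans (mxrank_sum_leqif _).1 _; rewrite /= -sum1_card leq_sum // => u _.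
by rewrite genmxE rank_leq_row.
Qed.

Lemma bool_row_sub_span (A : {set {ffun 'I_N -> bool}}) u :
  u \in A -> (bool_row u <= bool_span A)%MS.
Proof. by move=> uA; apply: (sumsmx_sup u) => //; rewrite genmxE. Qed.

Definition bool_meet (u v : {ffun 'I_N -> bool}) : {ffun 'I_N -> bool} :=
  [ffun k => u k && v k].

Definition meet_pairs (C : {set {ffun 'I_N -> bool}}) : {set {ffun 'I_N -> bool}} :=
  [set bool_meet uv.1 uv.2 | uv in setX C C].

Lemma card_meet_pairs C : (#|meet_pairs C| <= #|C| * #|C|)%N.
Proof. by rewrite -cardsX leq_imset_card. Qed.

End BoolRows.

Lemma row_add_sub (K : fieldType) p N (S : 'M[K]_(p, N)) (h1 h2 : 'I_N -> K) :
  (\row_k h1 k <= S)%MS -> (\row_k h2 k <= S)%MS -> ((\row_k (h1 k + h2 k))%R <= S)%MS.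
Proof.
move=> h1S h2S; have -> : (\row_k (h1 k + h2 k) = \row_k h1 k + \row_k h2 k)%R.
  by apply/rowP => k; rewrite !mxE.
exact: addmx_sub.
Qed.

Lemma row_sumR_sub p N (S : 'M[R]_(p, N)) n (h : nat -> 'I_N -> R) :
  (forall i, (i < n)%N -> (\row_k h i k <= S)%MS) -> (\row_k sumR n (fun i => h i k) <= S)%MS.
Proof.
elim: n => [|n IHn] hS /=.
  have -> : \row_(k < N) (0 : R) = 0 by apply/rowP => k; rewrite !mxE.
  exact: sub0mx.
by apply: row_add_sub; [apply: IHn => i /ltnW/hS | apply: hS].
Qed.

Lemma b2R_natr (b : bool) : b2R b = b%:R.
Proof. by case: b. Qed.

Section QuadraticRows.
Variables (N : nat) (C : {set {ffun 'I_N -> bool}}).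

Lemma meet_pairs_row_sub u v (c : R) : u \in C -> v \in C ->
  ((\row_k (c * b2R (u k) * b2R (v k)))%R <= bool_span R (meet_pairs C))%MS.
Proof.
move=> uC vC; have -> : (\row_k (c * b2R (u k) * b2R (v k)) = c *: bool_row R (bool_meet u v))%R.
  by apply/rowP => k; rewrite !mxE ffunE !b2R_natr -mulrA -natrM mulnb.
by apply/scalemx_sub/bool_row_sub_span; apply/imsetP; exists (u, v); rewrite ?in_setX ?uC.
Qed.

Lemma qp_eval_row_sub n g (z : 'I_N -> nat -> bool) :
  [ffun=> true] \in C -> (forall i, (i < n)%N -> [ffun k => z k i] \in C) ->
  (\row_k qp_eval n g (z k) <= bool_span R (meet_pairs C))%MS.
Proof.
move=> oneC colC; apply: row_add_sub; first apply: row_add_sub.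
- have := meet_pairs_row_sub (qp_const g) oneC oneC.
  by congr (_ <= _)%MS; apply/rowP => k; rewrite !mxE !ffunE /= mulr1 mulr1.
- apply: row_sumR_sub => i lt_in; have := meet_pairs_row_sub (qp_lin g i) (colC i lt_in) oneC.
  by congr (_ <= _)%MS; apply/rowP => k; rewrite !mxE !ffunE /= mulr1.
- apply: row_sumR_sub => i lt_in; apply: row_sumR_sub => j lt_jn.
  have := meet_pairs_row_sub (qp_quad g i j) (colC i lt_in) (colC j lt_jn).
  by congr (_ <= _)%MS; apply/rowP => k; rewrite !mxE !ffunE.
Qed.

End QuadraticRows.

(* Bridges ssrnat's [expn] to the [Nat.pow] of the lemmas on [binary_point]; they are not convertible. *)
Lemma expn_pow m n : (m ^ n)%N = Nat.pow m n.
Proof. by elim: n => [|n IHn]; rewrite ?expnS ?IHn. Qed.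

Definition binary_columns t m (y : 'I_(2 ^ t) -> nat -> bool) :
  {set {ffun 'I_(2 ^ t) -> bool}} :=
  [ffun=> true] |: ([set [ffun k : 'I_(2 ^ t) => Nat.testbit k a] | a : 'I_t]
                   :|: [set [ffun k => y k j] | j : 'I_m]).

Lemma card_binary_columns t m (y : 'I_(2 ^ t) -> nat -> bool) :
  (#|binary_columns m y| <= 1 + t + m)%N.
Proof.
rewrite cardsU1 -addnA leq_add ?leq_b1 //.
apply: leq_trans (leq_card_setU _ _) _.
by rewrite leq_add // -[X in (_ <= X)%N]card_ord leq_imset_card.
Qed.

Lemma binary_columns_coord t m (y : 'I_(2 ^ t) -> nat -> bool) i :
  (i < 2 ^ t - 1 + m)%N ->
  [ffun k : 'I_(2 ^ t) => concat_pt (2 ^ t - 1) (binary_point t k) (y k) i] \in binary_columns m y.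
Proof.
rewrite !inE => lt_i; apply/orP; right; apply/orP.
case: (ltnP i (2 ^ t - 1)) => [lt_in | le_ni].
  have lt_in' : (i < Nat.pow 2 t - 1)%coq_nat by rewrite -expn_pow; apply/ltP.
  left; apply/imsetP; exists (Ordinal (introT ltP (log2_lt_binary_dim _ _ lt_in'))) => //.
  by apply/ffunP => k; rewrite !ffunE concat_pt_l; [exact: binary_point_bit | exact/ltP].
have lt_jm : (i - (2 ^ t - 1) < m)%N by rewrite ltn_subLR.
right; apply/imsetP; exists (Ordinal lt_jm) => //.
by apply/ffunP => k; rewrite !ffunE concat_pt_r //; apply/leP.
Qed.

Lemma quadratization_moment_row_sub t m g (s : R) :
  is_quadratization (2 ^ t - 1) m (fun x => s ^+ hweight (2 ^ t - 1) x) g ->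
  exists y, (moment_row (2 ^ t) s <= bool_span R (meet_pairs (binary_columns m y)))%MS.
Proof.
move=> quad_g.
have /fin_all_exists[y y_opt] : forall k : 'I_(2 ^ t), exists yk, in_cube m yk /\
    qp_eval (2 ^ t - 1 + m) g (concat_pt (2 ^ t - 1) (binary_point t k) yk)
    = s ^+ hweight (2 ^ t - 1) (binary_point t k).
  by move=> k; apply: (quad_g _ _).2; have := in_cube_binary_point t k; rewrite -expn_pow.
exists y; have -> : moment_row (2 ^ t) s
    = \row_k qp_eval (2 ^ t - 1 + m) g (concat_pt (2 ^ t - 1) (binary_point t k) (y k)).
  apply/rowP => k; rewrite !mxE (y_opt k).2.
  by have := hweight_binary_point t k; rewrite -expn_pow => -> //; apply/ltP.
apply: qp_eval_row_sub => [|i lt_i]; first by rewrite !inE eqxx.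
exact: binary_columns_coord.
Qed.

Lemma quadratization_square_bound t m g (s : R) :
  (forall A, (\rank (bool_span R A) < 2 ^ t)%N -> ~~ (moment_row (2 ^ t) s <= bool_span R A)%MS) ->
  is_quadratization (2 ^ t - 1) m (fun x => s ^+ hweight (2 ^ t - 1) x) g ->
  (2 ^ t <= (1 + t + m) * (1 + t + m))%N.
Proof.
move=> s_avoids quad_g; rewrite leqNgt; apply/negP => small.
have [y y_sub] := quadratization_moment_row_sub quad_g.
have rank_lt : (\rank (bool_span R (meet_pairs (binary_columns m y))) < 2 ^ t)%N.
  apply: leq_ltn_trans (mxrank_bool_span _ _) _.
  apply: leq_ltn_trans (card_meet_pairs _) _.
  exact: leq_ltn_trans (leq_mul (card_binary_columns _ _) (card_binary_columns _ _)) small.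
by move: (s_avoids _ rank_lt); rewrite y_sub.
Qed.

Local Close Scope ring_scope.

(* ssrnat rebinds the scope [%nat] to its boolean [leq]; [%coq_nat] is Peano's [le]. *)
Theorem theorem7 :
  exists c : R, 0 < c /\
    forall N : nat, exists n : nat, (N <= n)%coq_nat /\
      exists f : (nat -> bool) -> R, symmetric_pbf n f /\
        forall (m : nat) (g : quad_poly), is_quadratization n m f g ->
          c * sqrt (INR n) <= INR m.
Proof.
exists (1 / 2); split; first lra.
move=> N; pose t := (N + 10)%N; exists (2 ^ t - 1)%N; split.
  by apply/leP; have := ltn_expl t (ltnSn 1); rewrite /t; lia.
have [s s_avoids] := exists_moment_row_notin (@bool_span R (2 ^ t)).
exists (fun x => (s ^+ hweight (2 ^ t - 1) x)%R); split; first by move=> x x' _ _ ->.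
move=> m g quad_g; rewrite expn_pow; apply: sqrt_le_of_square_bound.
  by apply/leP; rewrite leq_addl.
rewrite -expn_pow plusE multE; apply/leP.
exact: quadratization_square_bound s_avoids quad_g.
Qed.
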